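(* Assume $d_0\delta>2$ and let $\varepsilon_0=\frac{d_0}{2}-\frac1\delta>0$ and $t=\frac{d_0}{2}$. Let $G=(L\cup R,E)$ be a $(c,d,\alpha,\delta)$-bipartite expander with $L=[n]$, $C_0\subseteq\mathbb{F}_2^d$ a linear code of minimum distance $d_0$, $x\in\mathbb{F}_2^n$ and $y\in T(G,C_0)$ with $d_H(x,y)\le\alpha n$. Let $x'=\mathsf{RandFlip}(x)$. Then $\mathbb{E}[d_H(x',y)]\le\left(1-\frac{\varepsilon_0\delta}{t}\right)d_H(x,y)$.
   Context: Binary linear codes, Hamming distance $d_H$. A bipartite graph $G=(L\cup R,E)$ is $(c,d)$-regular if left degrees are $c$ and right degrees $d$; $N(S)$ is the neighborhood of $S$. A $(c,d,\alpha,\delta)$-bipartite expander ($c,d$ positive integers, $\alpha,\delta\in(0,1]$) is a $(c,d)$-regular bipartite graph with $|N(S)|\ge\delta c|S|$ for every $S\subseteq L$, $|S|\le\alpha|L|$. Tanner code: $L=[n]$, for each $v\in R$ a fixed ordering of $N(v)$ defines $x_{N(v)}\in\mathbb{F}_2^d$, and $T(G,C_0)=\{x: x_{N(v)}\in C_0\ \forall v\in R\}$. For $z\in\mathbb{F}_2^d$, $\mathsf{Decode}(z)$ is the codeword of $C_0$ closest to $z$, ties broken lexicographically. $\mathsf{RandFlip}(x)$: set $t=d_0/2$ and $p_1=\dots=p_n=0$; for each $v\in R$, let $w_v=\mathsf{Decode}(x_{N(v)})$; if $1\le d_H(w_v,x_{N(v)})<t$, let $i$ be the smallest element of $N(v)$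 at which $w_v$ and $x_{N(v)}$ differ and increase $p_i$ by $\frac{t-d_H(w_v,x_{N(v)})}{ct}$. Then flip each $x_i$ independently with probability $p_i$ and return the resulting word. *)

From HB Require Import structures.
From mathcomp Require Import all_boot all_order all_algebra.
From mathcomp Require Import reals.
Set Implicit Arguments. Unset Strict Implicit. Unset Printing Implicit Defensive.
Import Order.TTheory GRing.Theory Num.Theory.
Local Open Scope ring_scope.

(* Left vertices L = 'I_n, right vertices R = 'I_m.
   The bipartite graph together with the fixed ordering of each N(v)
   is given by  nbr : 'I_m -> 'I_d -> 'I_n,  nbr v j = j-th neighbour of v. *)

Definition dH (k : nat) (u v : 'rV['F_2]_k) : nat :=
  #|[set j : 'I_k | u 0 j != v 0 j]|.

(* (c,d)-regular simple bipartite graph: nbr v is injective (so right degree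
   is d) and every left vertex has exactly c neighbours. *)
Definition biregular (n m d : nat) (nbr : 'I_m -> 'I_d -> 'I_n) (c : nat) : Prop :=
  (forall v, injective (nbr v)) /\
  (forall i : 'I_n, #|[set v : 'I_m | i \in codom (nbr v)]| = c).

Definition nbhd (n m d : nat) (nbr : 'I_m -> 'I_d -> 'I_n) (S : {set 'I_n})
  : {set 'I_m} := [set v | [exists j, nbr v j \in S]].

Definition expander (R : realType) (n m d : nat) (nbr : 'I_m -> 'I_d -> 'I_n)
  (c : nat) (alpha delta : R) : Prop :=
  [/\ (0 < c)%N /\ (0 < d)%N, 0 < alpha <= 1, 0 < delta <= 1,
      biregular nbr c &
      forall S : {set 'I_n}, #|S|%:R <= alpha * n%:R ->
        delta * c%:R * #|S|%:R <= #|nbhd nbr S|%:R].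

Definition linear_code (k : nat) (C : {set 'rV['F_2]_k}) : Prop :=
  [/\ 0 \in C,
      forall u v, u \in C -> v \in C -> u + v \in C &
      forall (a : 'F_2) u, u \in C -> a *: u \in C].

Definition min_dist (k : nat) (C : {set 'rV['F_2]_k}) (d0 : nat) : Prop :=
  (exists u v, [/\ u \in C, v \in C, u != v & dH u v = d0]) /\
  (forall u v, u \in C -> v \in C -> u != v -> (d0 <= dH u v)%N).

Definition restr (n m d : nat) (nbr : 'I_m -> 'I_d -> 'I_n) (x : 'rV['F_2]_n)
  (v : 'I_m) : 'rV['F_2]_d := \row_j x 0 (nbr v j).

Definition tanner (n m d : nat) (nbr : 'I_m -> 'I_d -> 'I_n)
  (C0 : {set 'rV['F_2]_d}) : {set 'rV['F_2]_n} :=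
  [set x | [forall v, restr nbr x v \in C0]].

Definition lex_lt (k : nat) (u w : 'rV['F_2]_k) : bool :=
  [exists j : 'I_k, [forall j' : 'I_k, (j' < j)%N ==> (u 0 j' == w 0 j')]
                    && (u 0 j == 0) && (w 0 j == 1)].

(* Decode z : the codeword of C0 closest to z, ties broken lexicographically
   (0 if C0 is empty, which does not happen for linear codes) *)
Definition closest (k : nat) (C0 : {set 'rV['F_2]_k}) (z w : 'rV['F_2]_k) : bool :=
  (w \in C0) && [forall w' in C0, (dH w z <= dH w' z)%N].

Definition Decode (k : nat) (C0 : {set 'rV['F_2]_k}) (z : 'rV['F_2]_k)
  : 'rV['F_2]_k :=
  odflt 0 [pick w | closest C0 z w &&
                    [forall w', closest C0 z w' ==> (w' == w) || lex_lt w w']].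

Definition diffset (n m d : nat) (nbr : 'I_m -> 'I_d -> 'I_n)
  (C0 : {set 'rV['F_2]_d}) (x : 'rV['F_2]_n) (v : 'I_m) : {set 'I_n} :=
  [set i | [exists j, (nbr v j == i) &&
             (Decode C0 (restr nbr x v) 0 j != restr nbr x v 0 j)]].

Definition flip_prob (R : realType) (n m d : nat) (nbr : 'I_m -> 'I_d -> 'I_n)
  (C0 : {set 'rV['F_2]_d}) (d0 c : nat) (x : 'rV['F_2]_n) (i : 'I_n) : R :=
  let t : R := d0%:R / 2 in
  \sum_(v : 'I_m |
          let dv := dH (Decode C0 (restr nbr x v)) (restr nbr x v) in
          [&& (1 <= dv)%N, (dv%:R < t),
              i \in diffset nbr C0 x v &
              [forall i' in diffset nbr C0 x v, (i <= i')%N]])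
     (t - (dH (Decode C0 (restr nbr x v)) (restr nbr x v))%:R) / (c%:R * t).

(* x' = RandFlip(x) = x + f where the flip pattern f has independent
   coordinates, f_i = 1 with probability p_i.  Probability of pattern f: *)
Definition flip_pattern_prob (R : realType) (n : nat) (p : 'I_n -> R)
  (f : 'rV['F_2]_n) : R :=
  \prod_(i < n) (if f 0 i == 1 then p i else 1 - p i).

Definition expected_dist_randflip (R : realType) (n m d : nat)
  (nbr : 'I_m -> 'I_d -> 'I_n) (C0 : {set 'rV['F_2]_d}) (d0 c : nat)
  (x y : 'rV['F_2]_n) : R :=
  \sum_(f : 'rV['F_2]_n)
     flip_pattern_prob (flip_prob R nbr C0 d0 c x) f * (dH (x + f) y)%:R.

From HB Require Import structures.
From mathcomp Require Import all_boot all_order all_algebra.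
From mathcomp Require Import reals.
From mathcomp Require Import ring lra zify.
Import Order.TTheory GRing.Theory Num.Theory.
Local Open Scope ring_scope.

(* Let S be the set where x and y differ and e_v the number of errors in the
   window N(v).  Since the flips are independent,
   E[d(x', y)] = |S| - \sum_i s_i p_i with s_i = 1 on S and -1 off S.
   Regrouping the p_i by checks, a check v with 1 <= d_v < t, where d_v is the
   distance of its window to its decoding, contributes one vote of weight
   (t - d_v)/(ct), to a single vertex.  If 2 e_v < d0 the window decodes to
   y_{N(v)}, so d_v = e_v and the vote goes to an erroneous vertex: the gain
   is (t - e_v)/(ct).  Otherwise d0 <= d_v + e_v because the decoding is a
   codeword other than y_{N(v)}, and the vote loses at most (e_v - t)/(ct).
   Summing over the checks, the gain is at least
   (t |N(S)| - \sum_v e_v)/(ct) >= (t delta c |S| - c |S|)/(ct)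
   by expansion and by \sum_v e_v <= c |S|. *)

Set Implicit Arguments. Unset Strict Implicit.

Lemma F2_cases (b : 'F_2) : b = 0 \/ b = 1.
Proof. by case: b => [[|[|k]] //= Hk]; [left|right]; apply: val_inj. Qed.

Lemma sum_F2 (V : nmodType) (F : 'F_2 -> V) : \sum_(b : 'F_2) F b = F 0 + F 1.
Proof.
rewrite (bigD1 0) //= (bigD1 1) //= big1 ?addr0 // => b /andP[b1 b0].
by case: (F2_cases b) b0 b1 => ->.
Qed.

Lemma sum_rowF2_prod (R : comPzSemiRingType) (n : nat) (F : 'I_n -> 'F_2 -> R) :
  \sum_(f : 'rV['F_2]_n) \prod_(k < n) F k (f 0 k) = \prod_(k < n) (F k 0 + F k 1).
Proof.
rewrite -(eq_bigr _ (fun k _ => sum_F2 (F k))) bigA_distr_bigA /=.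
rewrite (reindex (fun f : 'rV['F_2]_n => [ffun k => f 0 k])) /=.
  by apply: eq_bigr => f _; apply: eq_bigr => k _; rewrite ffunE.
apply: onW_bij; exists (fun g : {ffun 'I_n -> 'F_2} => \row_k g k).
  by move=> f; apply/rowP => k; rewrite mxE ffunE.
by move=> g; apply/ffunP => k; rewrite ffunE mxE.
Qed.

Lemma dHC k (u v : 'rV['F_2]_k) : dH u v = dH v u.
Proof. by apply: eq_card => j; rewrite !inE eq_sym. Qed.

Lemma dH_triangle k (u v w : 'rV['F_2]_k) : (dH u w <= dH u v + dH v w)%N.
Proof.
apply: leq_trans (leq_card_setU _ _); apply: subset_leq_card.
by apply/subsetP => j; rewrite !inE; case: (u 0 j =P v 0 j) => // ->.
Qed.

Lemma natr_dH (R : pzSemiRingType) k (u v : 'rV['F_2]_k) :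
  (dH u v)%:R = \sum_i ((u 0 i != v 0 i)%:R : R).
Proof.
rewrite /dH -sumr_const big_mkcond /=; apply: eq_bigr => i _.
by rewrite inE; case: (_ != _).
Qed.

Definition error_sign (R : pzRingType) n (x y : 'rV['F_2]_n) (i : 'I_n) : R :=
  if x 0 i != y 0 i then 1 else -1.

Lemma expected_dist_flip (R : realType) n (p : 'I_n -> R) (x y : 'rV['F_2]_n) :
  \sum_f flip_pattern_prob p f * (dH (x + f) y)%:R =
  (dH x y)%:R - \sum_i error_sign R x y i * p i.
Proof.
under eq_bigr => f _ do rewrite natr_dH mulr_sumr.
rewrite exchange_big natr_dH -sumrB /=; apply: eq_bigr => i _.
pose q k (b : 'F_2) : R := if b == 1 then p k else 1 - p k.
pose g (b : 'F_2) : R := ((x 0 i + b) != y 0 i)%:R.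
pose Q k b := q k b * (if k == i then g b else 1).
transitivity (\sum_(f : 'rV['F_2]_n) \prod_(k < n) Q k (f 0 k)).
  by apply: eq_bigr => f _; rewrite big_split /= -big_mkcond big_pred1_eq /g mxE.
(* Every coordinate k != i sums out to p k + (1 - p k) = 1. *)
rewrite (sum_rowF2_prod Q) (bigD1 i) //= big1 => [|k ki]; last first.
  by rewrite /Q /q (negbTE ki) /= !mulr1 subrK.
rewrite /Q /q /g /error_sign eqxx /= mulr1.
by case: (F2_cases (x 0 i)) => ->; case: (F2_cases (y 0 i)) => -> /=; ring.
Qed.

Lemma Decode_close k (C0 : {set 'rV['F_2]_k}) d0 (z u : 'rV['F_2]_k) :
  min_dist C0 d0 -> u \in C0 -> (2 * dH u z < d0)%N -> Decode C0 z = u.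
Proof.
move=> [_ md] uC close.
have far w : w \in C0 -> w != u -> (dH u z < dH w z)%N.
  move=> wC wu; have := md w u wC uC wu; have := dH_triangle w z u.
  rewrite (dHC z u); lia.
have cu : closest C0 z u.
  rewrite /closest uC /=; apply/forall_inP => w wC.
  by case: (eqVneq w u) => [->|wu] //; exact: ltnW (far w wC wu).
have cw w : closest C0 z w -> w = u.
  move=> /andP[wC /forall_inP w_min]; apply/eqP; apply: contraT => wu.
  by have := w_min u uC; have := far w wC wu; lia.
rewrite /Decode; case: pickP => [w /andP[/cw -> _] //| /(_ u)].
rewrite cu /= => /negbT/negP[]; apply/forallP => w'; apply/implyP => /cw ->.
by rewrite eqxx.
Qed.

Lemma Decode_in k (C0 : {set 'rV['F_2]_k}) z : 0 \in C0 -> Decode C0 z \in C0.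
Proof. by move=> C00; rewrite /Decode; case: pickP => [w /andP[/andP[]]|]. Qed.

Section Restriction.

Variables (n m d : nat) (nbr : 'I_m -> 'I_d -> 'I_n) (x y : 'rV['F_2]_n).

Local Notation S := [set i | x 0 i != y 0 i].

Lemma dH_restr v : dH (restr nbr x v) (restr nbr y v) = #|[set j | nbr v j \in S]|.
Proof. by apply: eq_card => j; rewrite !inE !mxE. Qed.

Lemma dH_restr_eq0 v :
  (dH (restr nbr x v) (restr nbr y v) == 0%N) = (v \notin nbhd nbr S).
Proof.
rewrite dH_restr inE cards_eq0 negb_exists; apply/eqP/forallP => [S0 j|S0].
  by apply/negP => jS; have := in_set0 j; rewrite -S0 inE jS.
by apply/setP => j; have := S0 j; rewrite !inE => /negbTE.
Qed.

Lemma sum_dH_restr_le c : biregular nbr c ->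
  (\sum_v dH (restr nbr x v) (restr nbr y v) <= c * #|S|)%N.
Proof.
move=> [inj deg].
apply: (@leq_trans (\sum_v \sum_(i in S) (i \in codom (nbr v) : nat))).
  apply: leq_sum => v _; rewrite dH_restr -(card_imset _ (inj v)) -sum1_card.
  rewrite big_mkcond [X in (_ <= X)%N]big_mkcond /=; apply: leq_sum => i _.
  case: (boolP (i \in _ @: _)) => [/imsetP[j]|] //; rewrite inE => jS ->.
  by rewrite jS codom_f.
rewrite exchange_big /= mulnC -sum_nat_const; apply: leq_sum => i _.
rewrite -(deg i) -sum1_card [X in (_ <= X)%N]big_mkcond /=.
by apply: leq_sum => v _; rewrite inE; case: (_ \in _).
Qed.

End Restriction.

Section Votes.

Variables (R : realType) (n m d c d0 : nat) (nbr : 'I_m -> 'I_d -> 'I_n).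
Variables (C0 : {set 'rV['F_2]_d}) (x y : 'rV['F_2]_n).

Local Notation t := (d0%:R / 2 : R).
Local Notation sgn := (error_sign R x y).

Definition decoding_dist v : nat :=
  dH (Decode C0 (restr nbr x v)) (restr nbr x v).

Definition check_error v : nat := dH (restr nbr x v) (restr nbr y v).

Definition votes v i : bool :=
  [&& (1 <= decoding_dist v)%N, (decoding_dist v)%:R < t,
      i \in diffset nbr C0 x v & [forall i' in diffset nbr C0 x v, (i <= i')%N]].

Definition vote_weight v : R := (t - (decoding_dist v)%:R) / (c%:R * t).

(* [flip_prob R nbr C0 d0 c x i] unfolds to [\sum_(v | votes v i) vote_weight v]. *)
Lemma sum_sign_flip_prob :
  \sum_i sgn i * flip_prob R nbr C0 d0 c x i =
  \sum_v \sum_(i | votes v i) sgn i * vote_weight v.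
Proof.
under eq_bigr do rewrite mulr_sumr.
exact: (exchange_big_dep xpredT).
Qed.

Lemma sum_votes v i (F : 'I_n -> R) : votes v i -> \sum_(j | votes v j) F j = F i.
Proof.
move=> vi; have /and4P[_ _ iD /forall_inP min_i] := vi.
apply: big_pred1 => j /=.
apply/idP/eqP => [/and4P[_ _ jD /forall_inP min_j]|-> //].
by apply/val_inj/eqP; rewrite eqn_leq min_i ?min_j.
Qed.

Definition check_bound v : R :=
  if check_error v == 0%N then 0 else (t - (check_error v)%:R) / (c%:R * t).

Hypotheses (C0_min : min_dist C0 d0) (C0_0 : 0 \in C0).
Hypothesis y_tanner : y \in tanner nbr C0.

Lemma restr_tanner v : restr nbr y v \in C0.
Proof. by move: y_tanner; rewrite inE => /forallP. Qed.

Lemma check_bound_close v : (2 * check_error v < d0)%N ->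
  check_bound v = \sum_(i | votes v i) sgn i * vote_weight v.
Proof.
move=> close.
have Dy : Decode C0 (restr nbr x v) = restr nbr y v.
  by apply: Decode_close C0_min (restr_tanner v) _; rewrite dHC.
have dvE : decoding_dist v = check_error v by rewrite /decoding_dist Dy dHC.
rewrite /check_bound /vote_weight -dvE; case: eqP => [dv0 | /eqP dv0].
  by rewrite big_pred0 // => i; rewrite /votes dv0.
have [j xy_j] : exists j, x 0 (nbr v j) != y 0 (nbr v j).
  move: dv0; rewrite dvE /check_error dH_restr cards_eq0 => /set0Pn[j].
  by rewrite !inE => ?; exists j.
have diffE i :
    i \in diffset nbr C0 x v = (i \in codom (nbr v)) && (x 0 i != y 0 i).
  rewrite inE; apply/existsP/andP => [[j' /andP[/eqP <-]]|[/codomP[j' ->] ?]].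
    by rewrite Dy !mxE eq_sym codom_f.
  by exists j'; rewrite eqxx Dy !mxE eq_sym.
have jD : nbr v j \in diffset nbr C0 x v by rewrite diffE codom_f.
have [i iD min_i] := arg_minnP (fun i : 'I_n => nat_of_ord i) jD.
have vi : votes v i.
  rewrite /votes lt0n dv0; apply/and4P; split=> //; last exact/forall_inP.
  by rewrite ltr_pdivlMr // -natrM ltr_nat mulnC dvE.
have /andP[_ xy_i] : (i \in codom (nbr v)) && (x 0 i != y 0 i) by rewrite -diffE.
by rewrite (sum_votes _ vi) /error_sign xy_i mul1r.
Qed.

Lemma check_bound_far v : (d0 <= 2 * check_error v)%N ->
  check_bound v <= \sum_(i | votes v i) sgn i * vote_weight v.
Proof.
move=> far; have te : t <= (check_error v)%:R.
  by rewrite ler_pdivrMr // -natrM ler_nat mulnC.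
have ct_ge0 : 0 <= c%:R * t by rewrite mulr_ge0 ?divr_ge0.
rewrite /check_bound; case: (pickP (votes v)) => [i vi | novote]; last first.
  rewrite big_pred0 //; case: eqP => // _.
  by rewrite mulr_le0_ge0 ?invr_ge0 // subr_le0.
rewrite (sum_votes _ vi) /vote_weight [leRHS]mulrA.
have /and4P[_ dv_t _ _] := vi.
have e0 : check_error v != 0%N.
  by rewrite -lt0n -(ltr0n R); apply: le_lt_trans (lt_le_trans dv_t te).
rewrite (negbTE e0); apply: ler_wpM2r; first by rewrite invr_ge0.
have wy : Decode C0 (restr nbr x v) != restr nbr y v.
  apply: contraTneq dv_t => Dy; rewrite /decoding_dist Dy dHC -leNgt; exact: te.
have : (d0 <= decoding_dist v + check_error v)%N.
  apply: leq_trans (C0_min.2 _ _ (Decode_in _ C0_0) (restr_tanner v) wy) _.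
  exact: dH_triangle.
rewrite -(ler_nat R) natrD => sum_ge.
by rewrite /error_sign; case: ifP => _; rewrite ?mul1r ?mulN1r; lra.
Qed.

Lemma check_bound_le v :
  check_bound v <= \sum_(i | votes v i) sgn i * vote_weight v.
Proof.
case: (ltnP (2 * check_error v) d0) => [/check_bound_close -> // | ].
exact: check_bound_far.
Qed.

Local Notation S := [set i | x 0 i != y 0 i].

Lemma sum_check_bound :
  \sum_v check_bound v =
  (t * #|nbhd nbr S|%:R - (\sum_v check_error v)%:R) / (c%:R * t).
Proof.
transitivity (\sum_(v in nbhd nbr S) (t - (check_error v)%:R) / (c%:R * t)).
  rewrite [RHS]big_mkcond; apply: eq_bigr => v _.
  by rewrite /check_bound /check_error dH_restr_eq0; case: (v \in _).
rewrite -mulr_suml sumrB sumr_const natr_sum; congr ((_ - _) / _).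
  by rewrite mulr_natr.
rewrite big_mkcond; apply: eq_bigr => v _.
by case: ifPn => //; rewrite -dH_restr_eq0 /check_error => /eqP ->.
Qed.

Lemma sum_sign_flip_prob_ge alpha delta :
  expander nbr c alpha delta -> (0 < d0)%N -> (dH x y)%:R <= alpha * n%:R ->
  delta * (dH x y)%:R - (dH x y)%:R / t <=
  \sum_i sgn i * flip_prob R nbr C0 d0 c x i.
Proof.
move=> [[c_gt0 _] _ _ c_reg expand] d0_gt0 small.
have t_gt0 : 0 < t by rewrite divr_gt0 ?ltr0n.
have cR_gt0 : 0 < c%:R :> R by rewrite ltr0n.
have nbhd_ge := expand _ small.
have err_le : ((\sum_v check_error v)%:R : R) <= c%:R * (dH x y)%:R.
  by rewrite -natrM ler_nat; apply: sum_dH_restr_le.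
rewrite sum_sign_flip_prob.
apply: le_trans (ler_sum _ (fun v _ => check_bound_le v)).
rewrite sum_check_bound ler_pdivlMr; last exact: mulr_gt0.
have := ler_wpM2l (ltW t_gt0) nbhd_ge.
have -> : (delta * (dH x y)%:R - (dH x y)%:R / t) * (c%:R * t) =
          t * (delta * c%:R * (dH x y)%:R) - c%:R * (dH x y)%:R.
  by field; rewrite pnatr_eq0 -lt0n.
lra.
Qed.

End Votes.

Unset Implicit Arguments. Set Strict Implicit.

Theorem theorem3p2 (R : realType) (n m c d d0 : nat) (alpha delta : R)
  (nbr : 'I_m -> 'I_d -> 'I_n) (C0 : {set 'rV['F_2]_d}) (x y : 'rV['F_2]_n) :
  expander nbr c alpha delta ->
  linear_code C0 ->
  min_dist C0 d0 ->
  2 < d0%:R * delta ->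
  y \in tanner nbr C0 ->
  (dH x y)%:R <= alpha * n%:R ->
  let eps0 : R := d0%:R / 2 - 1 / delta in
  let t : R := d0%:R / 2 in
  expected_dist_randflip R nbr C0 d0 c x y
    <= (1 - eps0 * delta / t) * (dH x y)%:R.
Proof.
move=> expand [C0_0 _ _] C0_min d0_delta y_tanner small /=.
have [_ _ /andP[delta_gt0 _] _ _] := expand.
have d0_gt0 : (0 < d0)%N.
  by rewrite -(ltr0n R) -(pmulr_lgt0 _ delta_gt0); apply: lt_trans d0_delta.
have := sum_sign_flip_prob_ge C0_min C0_0 y_tanner expand d0_gt0 small.
rewrite /expected_dist_randflip expected_dist_flip.
have -> : (d0%:R / 2 - 1 / delta) * delta / (d0%:R / 2) = delta - 1 / (d0%:R / 2).
  by field; rewrite pnatr_eq0 -lt0n d0_gt0 gt_eqF.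
lra.
Qed.
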